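(* Let $v$ and $\tilde v$ be quadratic vector fields on $\mathbb{C}^2$, each having exactly four singular points in $\mathbb{C}^2$, all of them non-degenerate. If $v$ and $\tilde v$ have the same spectra of singularities, then there is an affine map $T$ of $\mathbb{C}^2$ such that the transform $T_*\tilde v$ either equals $v$ or is a twin vector field of $v$. Moreover, there is a nonempty Zariski-open subset $U$ of the space $\mathcal{A}_2$ of quadratic vector fields such that every $v\in U$ has exactly one twin vector field.
   Context: A quadratic vector field on $\mathbb{C}^2$ is $v=P\,\partial_x+Q\,\partial_y$ with $P,Q\in\mathbb{C}[x,y]$ of degree at most $2$; $\mathcal{A}_2$ denotes the (12-dimensional) vector space of these. A singular point is a common zero $p$ of $P,Q$. It is non-degenerate if $\det Dv(p)\neq 0$, where $Dv(p)=\begin{pmatrix}P_x&P_y\\Q_x&Q_y\end{pmatrix}(p)$. The spectrum of $v$ at $p$ is the ordered pair $(\operatorname{tr}Dv(p),\det Dv(p))$. Two such vector fields have the same spectra of singularities if the multisets $\{(\operatorname{tr}Dv(p),\det Dv(p)) : p\in \mathrm{Sing}(v)\}$ coincide, where positions of the singular points are not taken into account. For an affine map $T$ of $\mathbb{C}^2$, $T_*v(x,y)=DT\cdot v(T^{-1}(x,y))$. Two vector fields are affine equivalent if one is $T_*$ of the other for some affine $T$. Two vector fields $v_1,v_2$ with isolated singularities are twin vector fields if $v_1\neq v_2$, they have exactly the same singular set, and for each common singular point $p$ the matrices $Dv_1(p)$ and $Dv_2(p)$ have the same trace and determinant. *)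

(* The complex plane C^2 is modelled as R * R for an arbitrary
   algebraically closed field R of characteristic 0 (C is such a field). *)
From HB Require Import structures.
From mathcomp Require Import all_boot all_order all_algebra.
Set Implicit Arguments. Unset Strict Implicit. Unset Printing Implicit Defensive.
Import Order.TTheory GRing.Theory.
Local Open Scope ring_scope.

Section QVF.
Variable R : closedFieldType.

(* A_2: quadratic vector field v = P d/dx + Q d/dy, coded by its 12 coefficients
   P = c0 + c1 x + c2 y + c3 x^2 + c4 x y + c5 y^2,
   Q = c6 + c7 x + c8 y + c9 x^2 + c10 x y + c11 y^2. *)
Definition qvf := 'rV[R]_12.

Definition coef (v : qvf) (k : nat) : R := v ord0 (inord k).

Definition vP (v : qvf) (p : R * R) : R :=
  let: (x, y) := p in
  coef v 0 + coef v 1 * x + coef v 2 * y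
  + coef v 3 * x ^+ 2 + coef v 4 * x * y + coef v 5 * y ^+ 2.

Definition vQ (v : qvf) (p : R * R) : R :=
  let: (x, y) := p in
  coef v 6 + coef v 7 * x + coef v 8 * y
  + coef v 9 * x ^+ 2 + coef v 10 * x * y + coef v 11 * y ^+ 2.

Definition vPx (v : qvf) (p : R * R) : R :=
  coef v 1 + 2%:R * coef v 3 * p.1 + coef v 4 * p.2.
Definition vPy (v : qvf) (p : R * R) : R :=
  coef v 2 + coef v 4 * p.1 + 2%:R * coef v 5 * p.2.
Definition vQx (v : qvf) (p : R * R) : R :=
  coef v 7 + 2%:R * coef v 9 * p.1 + coef v 10 * p.2.
Definition vQy (v : qvf) (p : R * R) : R :=
  coef v 8 + coef v 10 * p.1 + 2%:R * coef v 11 * p.2.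

Definition trD (v : qvf) (p : R * R) : R := vPx v p + vQy v p.
Definition detD (v : qvf) (p : R * R) : R := vPx v p * vQy v p - vPy v p * vQx v p.
Definition spectrum (v : qvf) (p : R * R) : R * R := (trD v p, detD v p).

Definition singular (v : qvf) (p : R * R) : Prop := vP v p = 0 /\ vQ v p = 0.

Definition sing_list (v : qvf) (s : seq (R * R)) : Prop :=
  uniq s /\ forall p, singular v p <-> p \in s.

Definition four_nondeg_sing (v : qvf) : Prop :=
  exists s, sing_list v s /\ size s = 4%N /\ forall p, p \in s -> detD v p != 0.

Definition same_spectra (v w : qvf) : Prop :=
  exists s t, sing_list v s /\ sing_list w t /\
    perm_eq (map (spectrum v) s) (map (spectrum w) t).

(* isolated singularities (for polynomial fields on the plane: finite singular set) *)
Definition isolated_sing (v : qvf) : Prop := exists s, sing_list v s.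

Definition twin (v1 v2 : qvf) : Prop :=
  v1 <> v2 /\ isolated_sing v1 /\ isolated_sing v2 /\
  (forall p, singular v1 p <-> singular v2 p) /\
  (forall p, singular v1 p -> trD v1 p = trD v2 p /\ detD v1 p = detD v2 p).

Definition affT (a b c d e f : R) (p : R * R) : R * R :=
  (a * p.1 + b * p.2 + e, c * p.1 + d * p.2 + f).

Definition is_pushforward (a b c d e f : R) (v w : qvf) : Prop :=
  forall p, vP w (affT a b c d e f p) = a * vP v p + b * vQ v p /\
            vQ w (affT a b c d e f p) = c * vP v p + d * vQ v p.

(* polynomials in the 12 coordinates of A_2: lists of (coefficient, exponent vector) *)
Definition mpoly12 := seq (R * {ffun 'I_12 -> nat}).
Definition meval (f : mpoly12) (v : qvf) : R :=
  \sum_(m <- f) m.1 * \prod_(i < 12) v ord0 i ^+ m.2 i.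

(* Zariski-open subsets of A_2: complements of common zero sets of finitely many polynomials *)
Definition zariski_open (U : qvf -> Prop) : Prop :=
  exists fs : seq mpoly12, forall v, U v <-> exists2 f, f \in fs & meval f v != 0.

End QVF.

(* The four singular points are in general position: a quadratic field vanishing at three
   collinear points vanishes on the whole line. An affine change of coordinates therefore
   moves them to (0,0), (1,0), (0,1), (al,be), and the Euler-Jacobi relation
   sum_i 1 / det Dv(p_i) = 0 expresses al and be through the Jacobian determinants; so two
   fields with equal spectra can be moved onto a common singular set, with equal spectra
   at each point.
   Two fields with the same four singular points differ by a constant matrix M. Being twins
   then means det M = 1 and tr (M Dv(p)) = tr Dv(p) at the singular points; as
   tr (X Dv(p)) is affine in p, the latter puts M - 1 in the kernel of a 3x4 matrix built
   from the coefficients, generically the line spanned by a vector N of 3x3 minors, and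
   det (1 + s N) = 1 has exactly one nonzero solution s. Genericity is the nonvanishing of
   one polynomial in the coefficients, checked at an explicit field. *)

From mathcomp Require Import all_boot all_order all_algebra ring zify.
From mathcomp Require Import separable.
Set Implicit Arguments. Unset Strict Implicit. Unset Printing Implicit Defensive.
Import GRing.Theory.
Local Open Scope ring_scope.

Section Coefficients.
Variable R : closedFieldType.
Hypothesis charR0 : [pchar R] =i pred0.

Lemma natrS_neq0 n : (n.+1%:R : R) != 0.
Proof. by have /pcharf0P -> := charR0. Qed.

Lemma natr_inj_pchar0 : injective (fun n : nat => n%:R : R).
Proof.
have /pcharf0P hc := charR0.
move=> n m /= E; case: (ltngtP n m) => // h.
  by have := hc (m - n)%N; rewrite natrB ?(ltnW h) // E subrr eqxx subn_eq0 leqNgt h.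
by have := hc (n - m)%N; rewrite natrB ?(ltnW h) // E subrr eqxx subn_eq0 leqNgt h.
Qed.

Lemma lin2_eq0 (a b c d x y : R) : a * d - b * c != 0 ->
  a * x + b * y = 0 -> c * x + d * y = 0 -> x = 0 /\ y = 0.
Proof.
move=> hd h1 h2.
have E1 : (a * d - b * c) * x = 0.
  by transitivity (d * (a * x + b * y) - b * (c * x + d * y)); [ring | rewrite h1 h2; ring].
have E2 : (a * d - b * c) * y = 0.
  by transitivity (a * (c * x + d * y) - c * (a * x + b * y)); [ring | rewrite h1 h2; ring].
by split; [move/eqP: E1 | move/eqP: E2]; rewrite mulf_eq0 (negPf hd) => /eqP.
Qed.

Definition qvf_of (g : nat -> R) : qvf R := \row_(i < 12) g i.

Lemma coef_qvf_of g k : (k < 12)%N -> coef (qvf_of g) k = g k.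
Proof. by move=> hk; rewrite /coef /qvf_of mxE inordK. Qed.

Lemma qvf_coefP (v w : qvf R) :
  (forall k, (k < 12)%N -> coef v k = coef w k) -> v = w.
Proof.
move=> H; apply/rowP => i.
by have := H i (ltn_ord i); rewrite /coef inord_val => ->.
Qed.

Lemma quadratic_fun_eq0 (c : nat -> R) :
  (forall x y : R, c 0%N + c 1%N * x + c 2%N * y + c 3%N * x ^+ 2
                   + c 4%N * x * y + c 5%N * y ^+ 2 = 0) ->
  forall k, (k < 6)%N -> c k = 0.
Proof.
pose f x y := c 0%N + c 1%N * x + c 2%N * y + c 3%N * x ^+ 2 + c 4%N * x * y + c 5%N * y ^+ 2.
move=> H; have {}H : forall x y, f x y = 0 by exact: H.
have half (d : R) : 2%:R * d = 0 -> d = 0.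
  by move/eqP; rewrite mulf_eq0 (negPf (natrS_neq0 1)) => /eqP.
have h0 : c 0%N = 0 by rewrite -(H 0 0) /f; ring.
have h1 : c 1%N = 0.
  by apply: half; transitivity (f 1 0 - f (-1) 0); [rewrite /f; ring | rewrite !H subr0].
have h2 : c 2%N = 0.
  by apply: half; transitivity (f 0 1 - f 0 (-1)); [rewrite /f; ring | rewrite !H subr0].
have h3 : c 3%N = 0.
  apply: half; transitivity (f 1 0 + f (-1) 0 - 2%:R * f 0 0); first by rewrite /f; ring.
  by rewrite !H; ring.
have h5 : c 5%N = 0.
  apply: half; transitivity (f 0 1 + f 0 (-1) - 2%:R * f 0 0); first by rewrite /f; ring.
  by rewrite !H; ring.
have h4 : c 4%N = 0.
  by transitivity (f 1 1 - f 0 0); [rewrite /f h1 h2 h3 h5; ring | rewrite !H subr0].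
by case=> [|[|[|[|[|[|]]]]]].
Qed.

Lemma qvf_evalP (v w : qvf R) :
  (forall p, vP v p = vP w p /\ vQ v p = vQ w p) -> v = w.
Proof.
move=> H; apply: qvf_coefP => k hk; apply/eqP; rewrite -subr_eq0; apply/eqP.
case: (ltnP k 6) => hk6.
  apply: (@quadratic_fun_eq0 (fun i => coef v i - coef w i)) => // x y.
  by transitivity (vP v (x, y) - vP w (x, y)); [rewrite /vP; ring | rewrite (H _).1 subrr].
rewrite -(subnK hk6); apply: (@quadratic_fun_eq0 (fun i => coef v (i + 6) - coef w (i + 6))).
  move=> x y; transitivity (vQ v (x, y) - vQ w (x, y)); last by rewrite (H _).2 subrr.
  by rewrite /vQ; ring.
by rewrite ltn_subLR.
Qed.

End Coefficients.

Section Transform.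
Variable R : closedFieldType.

(* coefficients of g o S, for the quadratic g with coefficients g 0, ..., g 5
   and S = affT s1 s2 s3 s4 s5 s6 *)
Definition subst_coef (g : nat -> R) (s1 s2 s3 s4 s5 s6 : R) (k : nat) : R :=
  match k with
  | 0 => g 0%N + g 1%N * s5 + g 2%N * s6 + g 3%N * s5 ^+ 2 + g 4%N * s5 * s6 + g 5%N * s6 ^+ 2
  | 1 => g 1%N * s1 + g 2%N * s3 + 2%:R * g 3%N * s1 * s5 + g 4%N * (s1 * s6 + s3 * s5)
         + 2%:R * g 5%N * s3 * s6
  | 2 => g 1%N * s2 + g 2%N * s4 + 2%:R * g 3%N * s2 * s5 + g 4%N * (s2 * s6 + s4 * s5)
         + 2%:R * g 5%N * s4 * s6
  | 3 => g 3%N * s1 ^+ 2 + g 4%N * s1 * s3 + g 5%N * s3 ^+ 2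
  | 4 => 2%:R * g 3%N * s1 * s2 + g 4%N * (s1 * s4 + s2 * s3) + 2%:R * g 5%N * s3 * s4
  | _ => g 3%N * s2 ^+ 2 + g 4%N * s2 * s4 + g 5%N * s4 ^+ 2
  end.

Definition transform (a11 a12 a21 a22 s1 s2 s3 s4 s5 s6 : R) (v : qvf R) : qvf R :=
  let P := coef v in let Q i := coef v (i + 6) in
  qvf_of (fun k => if (k < 6)%N
    then a11 * subst_coef P s1 s2 s3 s4 s5 s6 k + a12 * subst_coef Q s1 s2 s3 s4 s5 s6 k
    else a21 * subst_coef P s1 s2 s3 s4 s5 s6 (k - 6)
         + a22 * subst_coef Q s1 s2 s3 s4 s5 s6 (k - 6)).

Section TransformEval.
Variables (a11 a12 a21 a22 s1 s2 s3 s4 s5 s6 : R) (v : qvf R).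
Let w := transform a11 a12 a21 a22 s1 s2 s3 s4 s5 s6 v.
Let S := affT s1 s2 s3 s4 s5 s6.

Lemma vP_transform p : vP w p = a11 * vP v (S p) + a12 * vQ v (S p).
Proof. by case: p => x y; rewrite /w /S /vP /vQ /affT /transform !coef_qvf_of //=; ring. Qed.

Lemma vQ_transform p : vQ w p = a21 * vP v (S p) + a22 * vQ v (S p).
Proof. by case: p => x y; rewrite /w /S /vP /vQ /affT /transform !coef_qvf_of //=; ring. Qed.

Lemma vPx_transform p : vPx w p =
  a11 * (vPx v (S p) * s1 + vPy v (S p) * s3) + a12 * (vQx v (S p) * s1 + vQy v (S p) * s3).
Proof.
by case: p => x y; rewrite /w /S /vPx /vPy /vQx /vQy /affT /transform !coef_qvf_of //=; ring.
Qed.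

Lemma vPy_transform p : vPy w p =
  a11 * (vPx v (S p) * s2 + vPy v (S p) * s4) + a12 * (vQx v (S p) * s2 + vQy v (S p) * s4).
Proof.
by case: p => x y; rewrite /w /S /vPx /vPy /vQx /vQy /affT /transform !coef_qvf_of //=; ring.
Qed.

Lemma vQx_transform p : vQx w p =
  a21 * (vPx v (S p) * s1 + vPy v (S p) * s3) + a22 * (vQx v (S p) * s1 + vQy v (S p) * s3).
Proof.
by case: p => x y; rewrite /w /S /vPx /vPy /vQx /vQy /affT /transform !coef_qvf_of //=; ring.
Qed.

Lemma vQy_transform p : vQy w p =
  a21 * (vPx v (S p) * s2 + vPy v (S p) * s4) + a22 * (vQx v (S p) * s2 + vQy v (S p) * s4).
Proof.
by case: p => x y; rewrite /w /S /vPx /vPy /vQx /vQy /affT /transform !coef_qvf_of //=; ring.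
Qed.

End TransformEval.

Lemma affT_id (p : R * R) : affT 1 0 0 1 0 0 p = p.
Proof. by case: p => x y; rewrite /affT /=; congr pair; ring. Qed.

Lemma affT_comp (g1 g2 g3 g4 g5 g6 h1 h2 h3 h4 h5 h6 : R) p :
  affT (g1 * h1 + g2 * h3) (g1 * h2 + g2 * h4) (g3 * h1 + g4 * h3) (g3 * h2 + g4 * h4)
       (g1 * h5 + g2 * h6 + g5) (g3 * h5 + g4 * h6 + g6) p =
  affT g1 g2 g3 g4 g5 g6 (affT h1 h2 h3 h4 h5 h6 p).
Proof. by case: p => x y; rewrite /affT /=; congr pair; ring. Qed.

Definition lmul (a11 a12 a21 a22 : R) (v : qvf R) := transform a11 a12 a21 a22 1 0 0 1 0 0 v.

Section LeftMul.
Variables (a11 a12 a21 a22 : R) (v : qvf R).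
Let w := lmul a11 a12 a21 a22 v.

Lemma vP_lmul p : vP w p = a11 * vP v p + a12 * vQ v p.
Proof. by rewrite /w /lmul vP_transform affT_id. Qed.

Lemma vQ_lmul p : vQ w p = a21 * vP v p + a22 * vQ v p.
Proof. by rewrite /w /lmul vQ_transform affT_id. Qed.

Lemma trD_lmul p :
  trD w p = a11 * vPx v p + a12 * vQx v p + a21 * vPy v p + a22 * vQy v p.
Proof. by rewrite /trD /w /lmul vPx_transform vQy_transform affT_id; ring. Qed.

Lemma detD_lmul p : detD w p = (a11 * a22 - a12 * a21) * detD v p.
Proof.
by rewrite /detD /w /lmul vPx_transform vPy_transform vQx_transform vQy_transform affT_id; ring.
Qed.

Lemma singular_lmul p : a11 * a22 - a12 * a21 != 0 -> singular w p <-> singular v p.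
Proof.
move=> hd; rewrite /singular vP_lmul vQ_lmul.
by split=> [[]|[-> ->]]; [exact: lin2_eq0 | rewrite !mulr0 !addr0].
Qed.

End LeftMul.
End Transform.

Section Pushforward.
Variable R : closedFieldType.
Hypothesis charR0 : [pchar R] =i pred0.

Lemma lmul1 (v : qvf R) : lmul 1 0 0 1 v = v.
Proof. by apply: qvf_evalP => // p; rewrite vP_lmul vQ_lmul; split; ring. Qed.

Variables (a b c d e f : R).
Hypothesis hd : a * d - b * c != 0.

(* coefficients of the inverse of affT a b c d e f *)
Definition inv11 := d / (a * d - b * c).
Definition inv12 := - b / (a * d - b * c).
Definition inv21 := - c / (a * d - b * c).
Definition inv22 := a / (a * d - b * c).
Definition inv1 := (b * f - d * e) / (a * d - b * c).
Definition inv2 := (c * e - a * f) / (a * d - b * c).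

Let T := affT a b c d e f.
Let S := affT inv11 inv12 inv21 inv22 inv1 inv2.

Lemma affTK : cancel T S.
Proof.
case=> x y; rewrite /S /T /affT /inv11 /inv12 /inv21 /inv22 /inv1 /inv2 /=.
by congr (_, _); field.
Qed.

Lemma affTKV : cancel S T.
Proof.
case=> x y; rewrite /S /T /affT /inv11 /inv12 /inv21 /inv22 /inv1 /inv2 /=.
by congr (_, _); field.
Qed.

Lemma affT_inj : injective T. Proof. exact: can_inj affTK. Qed.

Lemma det_inv_neq0 : inv11 * inv22 - inv12 * inv21 != 0.
Proof.
have -> : inv11 * inv22 - inv12 * inv21 = (a * d - b * c)^-1.
  by rewrite /inv11 /inv12 /inv21 /inv22; field.
by rewrite invr_eq0.
Qed.

Definition pushforward (v : qvf R) := transform a b c d inv11 inv12 inv21 inv22 inv1 inv2 v.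

Lemma pushforwardP v : is_pushforward a b c d e f v (pushforward v).
Proof. by move=> p; rewrite /pushforward vP_transform vQ_transform -/S affTK. Qed.

Lemma is_pushforward_uniq v w : is_pushforward a b c d e f v w -> w = pushforward v.
Proof.
move=> H; apply: qvf_evalP => // q.
rewrite /pushforward vP_transform vQ_transform -/S.
by have [<- <-] := H (S q); rewrite -/T affTKV.
Qed.

Lemma singular_pushforward v w p :
  is_pushforward a b c d e f v w -> singular w (T p) <-> singular v p.
Proof.
by move=> /(_ p) [hP hQ]; rewrite /singular /T hP hQ;
  split=> [[]|[-> ->]]; [exact: lin2_eq0 | rewrite !mulr0 !addr0].
Qed.

Lemma spectrum_pushforward v w p : is_pushforward a b c d e f v w ->
  trD w (T p) = trD v p /\ detD w (T p) = detD v p.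
Proof.
move=> /is_pushforward_uniq ->.
rewrite /trD /detD /pushforward vPx_transform vPy_transform vQx_transform vQy_transform -/S affTK.
by rewrite /inv11 /inv12 /inv21 /inv22; split; field.
Qed.

Lemma sing_list_pushforward v w s : is_pushforward a b c d e f v w ->
  sing_list v s -> sing_list w (map T s).
Proof.
move=> hp [us hs]; split; first by rewrite map_inj_uniq //; exact: affT_inj.
by move=> q; rewrite -(affTKV q) (singular_pushforward _ hp) hs mem_map //; exact: affT_inj.
Qed.

Lemma lmul_pushforward (v w : qvf R) k11 k12 k21 k22 :
  pushforward w = lmul k11 k12 k21 k22 (pushforward v) ->
  exists m11 m12 m21 m22, w = lmul m11 m12 m21 m22 v.
Proof.
move=> Ek; pose D := a * d - b * c.
exists ((d * (k11 * a + k12 * c) - b * (k21 * a + k22 * c)) / D),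
  ((d * (k11 * b + k12 * d) - b * (k21 * b + k22 * d)) / D),
  ((- c * (k11 * a + k12 * c) + a * (k21 * a + k22 * c)) / D),
  ((- c * (k11 * b + k12 * d) + a * (k21 * b + k22 * d)) / D).
apply: qvf_evalP => // q.
have [hv1 hv2] := pushforwardP v q; have [hw1 hw2] := pushforwardP w q.
have eP : vP w q = (d * vP (pushforward w) (T q) - b * vQ (pushforward w) (T q)) / D.
  by rewrite hw1 hw2 /D; field.
have eQ : vQ w q = (- c * vP (pushforward w) (T q) + a * vQ (pushforward w) (T q)) / D.
  by rewrite hw1 hw2 /D; field.
by rewrite eP eQ Ek !vP_lmul !vQ_lmul hv1 hv2 /D; split; field.
Qed.

End Pushforward.

Section Collinear.
Variable R : closedFieldType.
Hypothesis charR0 : [pchar R] =i pred0.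

Definition cross (p q r : R * R) := (q.1 - p.1) * (r.2 - p.2) - (q.2 - p.2) * (r.1 - p.1).

Definition line_pt (p : R * R) (u1 u2 k : R) : R * R := (p.1 + k * u1, p.2 + k * u2).

Lemma line_pt_inj p u1 u2 : (u1, u2) != (0, 0) -> injective (line_pt p u1 u2).
Proof.
move=> hu k k' [e1 e2]; apply/eqP; rewrite -subr_eq0; apply/eqP.
have E1 : (k - k') * u1 = 0 by rewrite mulrBl (addrI _ e1) subrr.
have E2 : (k - k') * u2 = 0 by rewrite mulrBl (addrI _ e2) subrr.
case: (eqVneq u1 0) => h1; last by move/eqP: E1; rewrite mulf_eq0 (negPf h1) orbF => /eqP.
case: (eqVneq u2 0) => h2; last by move/eqP: E2; rewrite mulf_eq0 (negPf h2) orbF => /eqP.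
by move: hu; rewrite h1 h2 eqxx.
Qed.

Lemma collinear_line_pt p q r : p != q -> cross p q r = 0 ->
  exists k, r = line_pt p (q.1 - p.1) (q.2 - p.2) k.
Proof.
move=> pq hc; rewrite /line_pt; set u1 := q.1 - p.1; set u2 := q.2 - p.2.
case: (eqVneq u1 0) => h1.
  have h2 : u2 != 0.
    apply: contra pq => /eqP h2; apply/eqP.
    rewrite [p]surjective_pairing [q]surjective_pairing.
    by congr pair; apply/esym/eqP; rewrite -subr_eq0; apply/eqP.
  exists ((r.2 - p.2) / u2); rewrite divfK // subrKC h1 mulr0 addr0.
  have : u2 * (r.1 - p.1) = 0.
    by apply/eqP; rewrite -oppr_eq0 -hc /cross -/u1 -/u2 h1; apply/eqP; ring.
  by move/eqP; rewrite mulf_eq0 (negPf h2) /= subr_eq0 => /eqP <-; case: (r).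
exists ((r.1 - p.1) / u1); rewrite divfK // subrKC.
have -> : (r.1 - p.1) / u1 * u2 = r.2 - p.2.
  apply: (mulIf h1); rewrite mulrAC divfK //; apply/eqP.
  by rewrite eq_sym -subr_eq0 -hc /cross -/u1 -/u2; apply/eqP; ring.
by rewrite subrKC; case: (r).
Qed.

Lemma quadratic_eq0_at3 (A B C k : R) : k != 0 -> k != 1 ->
  A = 0 -> A + B + C = 0 -> A + B * k + C * k ^+ 2 = 0 -> B = 0 /\ C = 0.
Proof.
move=> k0 k1 hA h1 hk; move: h1 hk; rewrite hA !add0r => h1 hk.
have hB : B = - C by apply/eqP; rewrite -subr_eq0 opprK h1.
have : k * (k - 1) * C = 0 by rewrite -hk hB; ring.
move/eqP; rewrite !mulf_eq0 (negPf k0) subr_eq0 (negPf k1) /= => /eqP hC.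
by rewrite hB hC oppr0.
Qed.

Lemma vP_line (v : qvf R) p u1 u2 k : vP v (line_pt p u1 u2 k) =
  vP v p + (vPx v p * u1 + vPy v p * u2) * k
  + (coef v 3 * u1 ^+ 2 + coef v 4 * u1 * u2 + coef v 5 * u2 ^+ 2) * k ^+ 2.
Proof. by case: p => x y; rewrite /line_pt /vP /vPx /vPy /=; ring. Qed.

Lemma vQ_line (v : qvf R) p u1 u2 k : vQ v (line_pt p u1 u2 k) =
  vQ v p + (vQx v p * u1 + vQy v p * u2) * k
  + (coef v 9 * u1 ^+ 2 + coef v 10 * u1 * u2 + coef v 11 * u2 ^+ 2) * k ^+ 2.
Proof. by case: p => x y; rewrite /line_pt /vQ /vQx /vQy /=; ring. Qed.

Lemma singular_line (v : qvf R) p u1 u2 k : k != 0 -> k != 1 ->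
  singular v p -> singular v (line_pt p u1 u2 1) -> singular v (line_pt p u1 u2 k) ->
  forall t, singular v (line_pt p u1 u2 t).
Proof.
move=> k0 k1 [h1 h2]; rewrite /singular !vP_line !vQ_line expr1n !mulr1.
move=> [h3 h4] [h5 h6] t; rewrite vP_line vQ_line.
have [-> ->] := quadratic_eq0_at3 k0 k1 h1 h3 h5.
have [-> ->] := quadratic_eq0_at3 k0 k1 h2 h4 h6.
by rewrite h1 h2 !mul0r !addr0.
Qed.

Lemma sing_list_not_all_injective (v : qvf R) s (g : R -> R * R) :
  sing_list v s -> injective g -> ~ (forall k, singular v (g k)).
Proof.
move=> [us hs] ig H.
have : (size [seq g i%:R | i <- iota 0 (size s).+1] <= size s)%N.
  apply: uniq_leq_size.
    by rewrite map_inj_uniq ?iota_uniq // => i j /ig /(natr_inj_pchar0 charR0).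
  by move=> z /mapP [i _ ->]; apply/hs.
by rewrite size_map size_iota ltnn.
Qed.

Lemma sing_list_not_collinear (v : qvf R) s p q r : sing_list v s ->
  p \in s -> q \in s -> r \in s -> p != q -> r != p -> r != q -> cross p q r != 0.
Proof.
move=> sl ps qs rs pq rp rq; apply/negP => /eqP hc.
have [k hk] := collinear_line_pt pq hc.
set u1 := q.1 - p.1 in hk; set u2 := q.2 - p.2 in hk.
have hq : q = line_pt p u1 u2 1 by rewrite /line_pt !mul1r /u1 /u2 !subrKC; case: (q).
have hu : (u1, u2) != (0, 0).
  apply: contra pq => /eqP [h1 h2]; apply/eqP.
  by rewrite hq /line_pt h1 h2 !mulr0 !addr0; case: (p).
have k0 : k != 0 by apply: contra rp => /eqP k0; rewrite hk k0 /line_pt !mul0r !addr0; case: (p).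
have k1 : k != 1 by apply: contra rq => /eqP k1; rewrite hk k1 -hq.
apply: (sing_list_not_all_injective sl (line_pt_inj hu)).
by apply: (singular_line (p := p) k0 k1); rewrite -?hq -?hk; apply/(sl.2 _).
Qed.

End Collinear.

Section NormalForm.
Variable R : closedFieldType.
Hypothesis charR0 : [pchar R] =i pred0.

Lemma affT_normalize3 (p1 p2 p3 : R * R) : cross p1 p2 p3 != 0 ->
  exists a b c d e f : R, [/\ a * d - b * c != 0, affT a b c d e f p1 = (0, 0),
     affT a b c d e f p2 = (1, 0) & affT a b c d e f p3 = (0, 1)].
Proof.
case: p1 => x1 y1; case: p2 => x2 y2; case: p3 => x3 y3; rewrite /cross /=.
set D := _ - _ => hD.
pose a := (y3 - y1) / D; pose b := - (x3 - x1) / D.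
pose c := - (y2 - y1) / D; pose d := (x2 - x1) / D.
exists a, b, c, d, (- (a * x1 + b * y1)), (- (c * x1 + d * y1)).
have -> : a * d - b * c = D^-1 by rewrite /a /b /c /d /D; field.
rewrite invr_eq0 hD /affT /=; split => //; first by congr pair; ring.
  by congr pair; rewrite /a /b /c /d /D; field.
by congr pair; rewrite /a /b /c /d /D; field.
Qed.

Section NormalPoints.
Variables (u : qvf R) (al be : R).
Hypotheses (ha : al != 0) (hb : be != 0).
Hypotheses (s1 : singular u (0, 0)) (s2 : singular u (1, 0)).
Hypotheses (s3 : singular u (0, 1)) (s4 : singular u (al, be)).

Lemma coef0_normal : coef u 0 = 0.
Proof. by case: s1 => h _; rewrite -h /vP /=; ring. Qed.

Lemma coef6_normal : coef u 6 = 0.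
Proof. by case: s1 => _ h; rewrite -h /vQ /=; ring. Qed.

Lemma coef1_normal : coef u 1 = - coef u 3.
Proof.
apply/eqP; rewrite -subr_eq0 opprK; apply/eqP; case: s2 => h _.
by transitivity (vP u (1, 0) - coef u 0); [rewrite /vP /=; ring | rewrite h coef0_normal subr0].
Qed.

Lemma coef7_normal : coef u 7 = - coef u 9.
Proof.
apply/eqP; rewrite -subr_eq0 opprK; apply/eqP; case: s2 => _ h.
by transitivity (vQ u (1, 0) - coef u 6); [rewrite /vQ /=; ring | rewrite h coef6_normal subr0].
Qed.

Lemma coef2_normal : coef u 2 = - coef u 5.
Proof.
apply/eqP; rewrite -subr_eq0 opprK; apply/eqP; case: s3 => h _.
by transitivity (vP u (0, 1) - coef u 0); [rewrite /vP /=; ring | rewrite h coef0_normal subr0].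
Qed.

Lemma coef8_normal : coef u 8 = - coef u 11.
Proof.
apply/eqP; rewrite -subr_eq0 opprK; apply/eqP; case: s3 => _ h.
by transitivity (vQ u (0, 1) - coef u 6); [rewrite /vQ /=; ring | rewrite h coef6_normal subr0].
Qed.

Lemma coef4_normal :
  coef u 4 = (coef u 3 * al * (1 - al) + coef u 5 * be * (1 - be)) / (al * be).
Proof.
apply: (mulIf (mulf_neq0 ha hb)); rewrite divfK ?mulf_neq0 //; case: s4 => h _.
transitivity (coef u 4 * (al * be) - vP u (al, be)); first by rewrite h subr0.
by rewrite /vP /= coef0_normal coef1_normal coef2_normal; ring.
Qed.

Lemma coef10_normal :
  coef u 10 = (coef u 9 * al * (1 - al) + coef u 11 * be * (1 - be)) / (al * be).
Proof.
apply: (mulIf (mulf_neq0 ha hb)); rewrite divfK ?mulf_neq0 //; case: s4 => _ h.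
transitivity (coef u 10 * (al * be) - vQ u (al, be)); first by rewrite h subr0.
by rewrite /vQ /= coef6_normal coef7_normal coef8_normal; ring.
Qed.

Let normal_coefE := (coef1_normal, coef2_normal, coef7_normal, coef8_normal,
  coef4_normal, coef10_normal).

Lemma vP_normal x y : vP u (x, y) =
  coef u 3 * (x ^+ 2 - x + (1 - al) / be * x * y)
  + coef u 5 * (y ^+ 2 - y + (1 - be) / al * x * y).
Proof. by rewrite /vP coef0_normal !normal_coefE; field; rewrite ?ha ?hb. Qed.

Lemma vQ_normal x y : vQ u (x, y) =
  coef u 9 * (x ^+ 2 - x + (1 - al) / be * x * y)
  + coef u 11 * (y ^+ 2 - y + (1 - be) / al * x * y).
Proof. by rewrite /vQ coef6_normal !normal_coefE; field; rewrite ?ha ?hb. Qed.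

Lemma detD00_normal : detD u (0, 0) = coef u 3 * coef u 11 - coef u 5 * coef u 9.
Proof.
by rewrite /detD /vPx /vPy /vQx /vQy /= coef1_normal coef2_normal coef7_normal coef8_normal; ring.
Qed.

(* Euler-Jacobi: the reciprocals of the four Jacobian determinants sum to 0 *)
Lemma detD10_normal : al * detD u (1, 0) = - detD u (0, 0) * (al + be - 1).
Proof.
by rewrite detD00_normal /detD /vPx /vPy /vQx /vQy /= !normal_coefE; field; rewrite ?ha ?hb.
Qed.

Lemma detD01_normal : be * detD u (0, 1) = - detD u (0, 0) * (al + be - 1).
Proof.
by rewrite detD00_normal /detD /vPx /vPy /vQx /vQy /= !normal_coefE; field; rewrite ?ha ?hb.
Qed.

Lemma detDab_normal : detD u (al, be) = detD u (0, 0) * (al + be - 1).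
Proof.
by rewrite detD00_normal /detD /vPx /vPy /vQx /vQy /= !normal_coefE; field; rewrite ?ha ?hb.
Qed.

End NormalPoints.

Lemma normal_sing4_lmul (u u' : qvf R) al be : al != 0 -> be != 0 ->
  singular u (0, 0) -> singular u (1, 0) -> singular u (0, 1) -> singular u (al, be) ->
  singular u' (0, 0) -> singular u' (1, 0) -> singular u' (0, 1) -> singular u' (al, be) ->
  detD u (0, 0) != 0 -> exists k11 k12 k21 k22, u' = lmul k11 k12 k21 k22 u.
Proof.
move=> ha hb s1 s2 s3 s4 t1 t2 t3 t4; rewrite (detD00_normal s1 s2 s3); set D := _ - _ => hD.
exists ((coef u' 3 * coef u 11 - coef u' 5 * coef u 9) / D),
  ((coef u' 5 * coef u 3 - coef u' 3 * coef u 5) / D),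
  ((coef u' 9 * coef u 11 - coef u' 11 * coef u 9) / D),
  ((coef u' 11 * coef u 3 - coef u' 9 * coef u 5) / D).
apply: (qvf_evalP charR0) => -[x y]; rewrite vP_lmul vQ_lmul.
rewrite (vP_normal ha hb t1 t2 t3 t4) (vQ_normal ha hb t1 t2 t3 t4).
rewrite (vP_normal ha hb s1 s2 s3 s4) (vQ_normal ha hb s1 s2 s3 s4).
by rewrite /D; split; field; rewrite ?ha ?hb ?hD.
Qed.

End NormalForm.

Section SameSpectra.
Variable R : closedFieldType.
Hypothesis charR0 : [pchar R] =i pred0.

Lemma sing_list_perm (v : qvf R) s s' : sing_list v s -> sing_list v s' -> perm_eq s s'.
Proof.
move=> [u1 h1] [u2 h2]; apply: uniq_perm => // x.
by apply/idP/idP => [/(h1 x)/(h2 x)|/(h2 x)/(h1 x)].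
Qed.

Lemma sing_list_perm_eq (v : qvf R) s s' : sing_list v s -> perm_eq s s' -> sing_list v s'.
Proof.
move=> [u1 h1] hp; split; first by rewrite -(perm_uniq hp).
by move=> p; rewrite -(perm_mem hp); exact: h1.
Qed.

Lemma perm_eq_map_align (T1 T2 U : eqType) (f : T1 -> U) (g : T2 -> U) s t :
  perm_eq (map f s) (map g t) -> exists2 t', perm_eq t t' & map g t' = map f s.
Proof.
elim: s t => [|x s IH] t /=.
  by rewrite perm_sym => /perm_nilP; case: t => // _; exists [::].
move=> hp; have : f x \in map g t by rewrite -(perm_mem hp) mem_head.
case/mapP => y yt gy.
have : perm_eq (map f s) (map g (rem y t)).
  rewrite -(perm_cons (f x)); apply: (perm_trans hp).
  by rewrite gy -map_cons; apply: perm_map; exact: perm_to_rem.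
case/IH => t' h1 h2; exists (y :: t'); last by rewrite /= h2 gy.
by apply: (perm_trans (perm_to_rem yt)); rewrite perm_cons.
Qed.

Lemma normalize_sing4 (u : qvf R) p1 p2 p3 p4 : sing_list u [:: p1; p2; p3; p4] ->
  exists a b c d e f al be : R, [/\ a * d - b * c != 0, affT a b c d e f p1 = (0, 0),
    affT a b c d e f p2 = (1, 0), affT a b c d e f p3 = (0, 1) &
    [/\ affT a b c d e f p4 = (al, be), al != 0, be != 0 & cross p1 p2 p3 != 0]].
Proof.
move=> sl; have [us _] := sl.
move: (us); rewrite /= !inE !negb_or -!andbA => /and5P[n12 n13 n14 n23 /andP[n24 /andP[n34 _]]].
have hc : cross p1 p2 p3 != 0.
  by apply: (sing_list_not_collinear charR0 sl); rewrite ?inE ?eqxx ?orbT // eq_sym.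
have [a [b [c [d [e [f [hd h1 h2 h3]]]]]]] := affT_normalize3 hc.
have := sing_list_pushforward hd (pushforwardP e f hd u) sl; rewrite /= h1 h2 h3.
case E4 : (affT a b c d e f p4) => [al be] sl'.
exists a, b, c, d, e, f, al, be; split => //.
have notcol := sing_list_not_collinear charR0 sl'.
have n01 : ((0 : R), (0 : R)) != (0, 1) by rewrite xpair_eqE eqxx /= eq_sym oner_eq0.
have n10 : ((0 : R), (0 : R)) != (1, 0) by rewrite xpair_eqE eqxx andbT eq_sym oner_eq0.
move: sl'.1; rewrite /= !inE !negb_or -!andbA => /and5P[_ _ m14 _ /andP[m24 /andP[m34 _]]].
split => //.
  have := notcol (0, 0) (0, 1) (al, be); rewrite !inE !eqxx !orbT /cross /=.
  rewrite n01 eq_sym m14 eq_sym m34 => /(_ isT isT isT isT isT isT).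
  by apply: contra => /eqP ->; apply/eqP; ring.
have := notcol (0, 0) (1, 0) (al, be); rewrite !inE !eqxx !orbT /cross /=.
rewrite n10 eq_sym m14 eq_sym m24 => /(_ isT isT isT isT isT isT).
by apply: contra => /eqP ->; apply/eqP; ring.
Qed.

(* the Euler-Jacobi relations pin down the image of the fourth point *)
Lemma normalize_sing4_spectral (u : qvf R) p1 p2 p3 p4 : sing_list u [:: p1; p2; p3; p4] ->
  (forall p, p \in [:: p1; p2; p3; p4] -> detD u p != 0) ->
  exists a b c d e f : R, a * d - b * c != 0 /\ affT a b c d e f p1 = (0, 0) /\
    affT a b c d e f p2 = (1, 0) /\ affT a b c d e f p3 = (0, 1) /\
    affT a b c d e f p4 = (- detD u p4 / detD u p2, - detD u p4 / detD u p3).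
Proof.
move=> sl nd.
have [a [b [c [d [e [f [al [be [hd h1 h2 h3 [h4 ha hb _]]]]]]]]]] := normalize_sing4 sl.
exists a, b, c, d, e, f; do 4! split => //; rewrite h4.
have hpf := pushforwardP e f hd u; pose w := pushforward a b c d e f u.
have sw : forall p, p \in [:: p1; p2; p3; p4] -> singular w (affT a b c d e f p).
  by move=> p /sl.2; rewrite (singular_pushforward _ _ hpf).
have S1 := sw p1; have S2 := sw p2; have S3 := sw p3; have S4 := sw p4.
rewrite h1 h2 h3 h4 !inE !eqxx ?orbT in S1 S2 S3 S4.
have [_ D1] := spectrum_pushforward charR0 hd p1 hpf.
have [_ D2] := spectrum_pushforward charR0 hd p2 hpf.
have [_ D3] := spectrum_pushforward charR0 hd p3 hpf.
have [_ D4] := spectrum_pushforward charR0 hd p4 hpf.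
rewrite h1 h2 h3 h4 in D1 D2 D3 D4.
have J1 := detD10_normal ha hb (S1 isT) (S2 isT) (S3 isT) (S4 isT).
have J2 := detD01_normal ha hb (S1 isT) (S2 isT) (S3 isT) (S4 isT).
have J3 := detDab_normal ha hb (S1 isT) (S2 isT) (S3 isT) (S4 isT).
rewrite -/w D1 D2 in J1; rewrite -/w D1 D3 in J2; rewrite -/w D1 D4 in J3.
have d2 : detD u p2 != 0 by apply: nd; rewrite !inE eqxx !orbT.
have d3 : detD u p3 != 0 by apply: nd; rewrite !inE eqxx !orbT.
congr pair.
  by apply: (mulIf d2); rewrite divfK // J1 J3; ring.
by apply: (mulIf d3); rewrite divfK // J2 J3; ring.
Qed.

Lemma same_spectra_aligned (v vt : qvf R) :
  four_nondeg_sing v -> four_nondeg_sing vt -> same_spectra v vt ->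
  exists p1 p2 p3 p4 q1 q2 q3 q4,
    [/\ sing_list v [:: p1; p2; p3; p4], sing_list vt [:: q1; q2; q3; q4],
        forall p, p \in [:: p1; p2; p3; p4] -> detD v p != 0,
        forall q, q \in [:: q1; q2; q3; q4] -> detD vt q != 0 &
        map (spectrum vt) [:: q1; q2; q3; q4] = map (spectrum v) [:: p1; p2; p3; p4]].
Proof.
move=> [s0 [sl0 [sz0 nd0]]] [t0 [tl0 [tz0 ndt]]] [s [t [sl [tl hp]]]].
have [t' tt' ht'] := perm_eq_map_align hp.
have ps := sing_list_perm sl0 sl; have pt := perm_trans (sing_list_perm tl0 tl) tt'.
have tl' := sing_list_perm_eq tl tt'.
move: (perm_size ps) (perm_size pt) (perm_mem ps) (perm_mem pt); rewrite sz0 tz0.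
case: s sl {hp ps} ht' => [|p1 [|p2 [|p3 [|p4 [|]]]]] //.
case: t' tl' {tt' pt} => [|q1 [|q2 [|q3 [|q4 [|]]]]] // tl' sl ht' _ _ ms mt.
exists p1, p2, p3, p4, q1, q2, q3, q4; split => // p.
  by rewrite -ms; exact: nd0.
by rewrite -mt; exact: ndt.
Qed.

Lemma affT_factor a1 b1 c1 d1 e1 f1 a2 b2 c2 d2 e2 f2 :
  a1 * d1 - b1 * c1 != 0 -> a2 * d2 - b2 * c2 != 0 ->
  exists a b c d e f : R, a * d - b * c != 0 /\
    forall q, affT a1 b1 c1 d1 e1 f1 (affT a b c d e f q) = affT a2 b2 c2 d2 e2 f2 q.
Proof.
move=> hd1 hd2.
pose g1 := inv11 a1 b1 c1 d1; pose g2 := inv12 a1 b1 c1 d1;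
pose g3 := inv21 a1 b1 c1 d1; pose g4 := inv22 a1 b1 c1 d1;
pose g5 := inv1 a1 b1 c1 d1 e1 f1; pose g6 := inv2 a1 b1 c1 d1 e1 f1.
exists (g1 * a2 + g2 * c2), (g1 * b2 + g2 * d2), (g3 * a2 + g4 * c2), (g3 * b2 + g4 * d2),
  (g1 * e2 + g2 * f2 + g5), (g3 * e2 + g4 * f2 + g6); split.
  have -> : (g1 * a2 + g2 * c2) * (g3 * b2 + g4 * d2) - (g1 * b2 + g2 * d2) * (g3 * a2 + g4 * c2)
          = (g1 * g4 - g2 * g3) * (a2 * d2 - b2 * c2) by ring.
  by rewrite mulf_neq0 // det_inv_neq0.
by move=> q; rewrite affT_comp affTKV.
Qed.

Lemma eq_or_twin (v w : qvf R) s : sing_list v s -> sing_list w s ->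
  (forall p, p \in s -> trD v p = trD w p /\ detD v p = detD w p) -> w = v \/ twin v w.
Proof.
move=> hv hw ht; case: (eqVneq w v) => [->|hne]; [by left | right].
split; first by move=> E; rewrite E eqxx in hne.
split; first by exists s.
split; first by exists s.
by split=> p; [rewrite (hv.2 p) (hw.2 p) | move/(hv.2 p)/ht].
Qed.

Lemma same_spectra_affine_twin (v vt : qvf R) :
  four_nondeg_sing v -> four_nondeg_sing vt -> same_spectra v vt ->
  exists (a b c d e f : R) (w : qvf R),
    a * d - b * c != 0 /\ is_pushforward a b c d e f vt w /\ (w = v \/ twin v w).
Proof.
move=> hv hvt hs.
have [p1 [p2 [p3 [p4 [q1 [q2 [q3 [q4 [sl tl nds ndt]]]]]]]]] := same_spectra_aligned hv hvt hs.
move=> hspec.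
have [_ D2 D3 D4] : map (detD vt) [:: q1; q2; q3; q4] = map (detD v) [:: p1; p2; p3; p4].
  rewrite (_ : detD vt = snd \o spectrum vt) // (_ : detD v = snd \o spectrum v) //.
  by rewrite !map_comp hspec.
have [a1 [b1 [c1 [d1 [e1 [f1 [hd1 [g1 [g2 [g3 g4]]]]]]]]]] := normalize_sing4_spectral sl nds.
have [a2 [b2 [c2 [d2 [e2 [f2 [hd2 [k1 [k2 [k3 k4]]]]]]]]]] := normalize_sing4_spectral tl ndt.
rewrite D2 D3 D4 -g4 in k4.
have [a [b [c [d [e [f [hd hT]]]]]]] := affT_factor e1 f1 e2 f2 hd1 hd2.
have hq : map (affT a b c d e f) [:: q1; q2; q3; q4] = [:: p1; p2; p3; p4].
  rewrite /=; congr [:: _; _; _; _]; apply: (affT_inj (e := e1) (f := f1) hd1);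
  by rewrite hT ?(k1, k2, k3, k4, g1, g2, g3).
have hsp : {in [:: q1; q2; q3; q4], spectrum vt =1 spectrum v \o affT a b c d e f}.
  by apply/eq_in_map; rewrite map_comp hq.
have hpf := pushforwardP e f hd vt.
exists a, b, c, d, e, f, (pushforward a b c d e f vt); split => //; split => //.
have wl := sing_list_pushforward hd hpf tl; rewrite hq in wl.
apply: (eq_or_twin sl wl) => p; rewrite -{1}hq => /mapP [q qin ->].
have [-> ->] := spectrum_pushforward charR0 hd q hpf.
by move: (hsp q qin); rewrite /spectrum /= => -[-> ->].
Qed.

End SameSpectra.

Section PolynomialFunctions.
Variable R : closedFieldType.

Definition polyfun (g : qvf R -> R) := exists F : mpoly12 R, forall v, meval F v = g v.

Lemma zariski_open_neq0 g : polyfun g -> zariski_open (fun v => g v != 0).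
Proof.
move=> [F HF]; exists [:: F] => v; split; first by exists F; rewrite ?mem_head ?HF.
by case=> G; rewrite inE => /eqP ->; rewrite HF.
Qed.

Lemma polyfun_ext g h : g =1 h -> polyfun g -> polyfun h.
Proof. by move=> E [F HF]; exists F => v; rewrite HF E. Qed.

Lemma polyfun_const c : polyfun (fun _ => c).
Proof.
exists [:: (c, [ffun=> 0%N])] => v; rewrite /meval big_seq1 /=.
by rewrite big1 ?mulr1 // => i _; rewrite ffunE expr0.
Qed.

Lemma polyfun_coef k : (k < 12)%N -> polyfun (fun v => coef v k).
Proof.
move=> hk; exists [:: (1, [ffun i : 'I_12 => (i == inord k : nat)])] => v.
rewrite /meval big_seq1 /= mul1r (bigD1 (inord k)) //= ffunE eqxx expr1.
by rewrite big1 ?mulr1 // => i /negPf hi; rewrite ffunE hi expr0.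
Qed.

Lemma polyfun_add g h : polyfun g -> polyfun h -> polyfun (fun v => g v + h v).
Proof. by move=> [F HF] [G HG]; exists (F ++ G) => v; rewrite /meval big_cat /= -HF -HG. Qed.

Lemma polyfun_mul g h : polyfun g -> polyfun h -> polyfun (fun v => g v * h v).
Proof.
move=> [F HF] [G HG].
exists [seq (m1.1 * m2.1, [ffun i => (m1.2 i + m2.2 i)%N])
       | m1 : R * {ffun 'I_12 -> nat} <- F, m2 : R * {ffun 'I_12 -> nat} <- G] => v.
rewrite -HF -HG /meval big_allpairs_dep mulr_suml; apply: eq_bigr => m1 _.
rewrite mulr_sumr; apply: eq_bigr => m2 _ /=.
under eq_bigr do rewrite ffunE exprD.
by rewrite big_split /=; ring.
Qed.

Lemma polyfun_opp g : polyfun g -> polyfun (fun v => - g v).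
Proof. by move=> h; apply: (polyfun_ext _ (polyfun_mul (polyfun_const (-1)) h)) => v; ring. Qed.

Lemma polyfun_mulrn g n : polyfun g -> polyfun (fun v => g v *+ n).
Proof.
by move=> h; apply: (polyfun_ext _ (polyfun_mul h (polyfun_const n%:R))) => v; rewrite mulr_natr.
Qed.

Lemma polyfun_sum (I : Type) (r : seq I) (P : pred I) (F : I -> qvf R -> R) :
  (forall i, polyfun (F i)) -> polyfun (fun v => \sum_(i <- r | P i) F i v).
Proof.
move=> H; elim: r => [|i r IH].
  by apply: (polyfun_ext _ (polyfun_const 0)) => v; rewrite big_nil.
case: (boolP (P i)) => hP.
  by apply: (polyfun_ext _ (polyfun_add (H i) IH)) => v; rewrite big_cons hP.
by apply: (polyfun_ext _ IH) => v; rewrite big_cons (negPf hP).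
Qed.

Lemma polyfun_prod (I : Type) (r : seq I) (P : pred I) (F : I -> qvf R -> R) :
  (forall i, polyfun (F i)) -> polyfun (fun v => \prod_(i <- r | P i) F i v).
Proof.
move=> H; elim: r => [|i r IH].
  by apply: (polyfun_ext _ (polyfun_const 1)) => v; rewrite big_nil.
case: (boolP (P i)) => hP.
  by apply: (polyfun_ext _ (polyfun_mul (H i) IH)) => v; rewrite big_cons hP.
by apply: (polyfun_ext _ IH) => v; rewrite big_cons (negPf hP).
Qed.

Lemma polyfun_det n (A : qvf R -> 'M[R]_n) :
  (forall i j, polyfun (fun v => A v i j)) -> polyfun (fun v => \det (A v)).
Proof.
move=> H; apply: polyfun_sum => s.
by apply: polyfun_mul; [exact: polyfun_const | apply: polyfun_prod => i; apply: H].
Qed.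

Definition polycoefs (P : qvf R -> {poly R}) := forall k, polyfun (fun v => (P v)`_k).

Lemma polycoefs_const (p : {poly R}) : polycoefs (fun _ => p).
Proof. by move=> k; apply: polyfun_const. Qed.

Lemma polycoefs_C g : polyfun g -> polycoefs (fun v => (g v)%:P).
Proof.
move=> h [|k]; first by apply: (polyfun_ext _ h) => v; rewrite coefC.
by apply: (polyfun_ext _ (polyfun_const 0)) => v; rewrite coefC.
Qed.

Lemma polycoefs_add P Q : polycoefs P -> polycoefs Q -> polycoefs (fun v => P v + Q v).
Proof.
by move=> hP hQ k; apply: (polyfun_ext _ (polyfun_add (hP k) (hQ k))) => v; rewrite coefD.
Qed.

Lemma polycoefs_opp P : polycoefs P -> polycoefs (fun v => - P v).
Proof. by move=> h k; apply: (polyfun_ext _ (polyfun_opp (h k))) => v; rewrite coefN. Qed.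

Lemma polycoefs_mul P Q : polycoefs P -> polycoefs Q -> polycoefs (fun v => P v * Q v).
Proof.
move=> hP hQ k; apply: (@polyfun_ext
  (fun v => \sum_(j <- index_enum 'I_k.+1 | true) (P v)`_j * (Q v)`_(k - j))).
  by move=> v; rewrite coefM.
by apply: polyfun_sum => j; apply: polyfun_mul.
Qed.

Lemma polycoefs_deriv P : polycoefs P -> polycoefs (fun v => (P v)^`()).
Proof.
move=> hP k; apply: (polyfun_ext _ (polyfun_mulrn k.+1 (hP k.+1))) => v.
by rewrite coef_deriv.
Qed.

Lemma polycoefs_XnM P n : polycoefs P -> polycoefs (fun v => 'X^n * P v).
Proof.
move=> hP k; case: (ltnP k n) => h.
  by apply: (polyfun_ext _ (polyfun_const 0)) => v; rewrite coefXnM h.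
by apply: (polyfun_ext _ (hP (k - n)%N)) => v; rewrite coefXnM ltnNge h.
Qed.

End PolynomialFunctions.

Section Sylvester.
Variable R : closedFieldType.

(* Sylvester matrix of p and q for degree bounds (N - n, n): unlike [Sylvester_mx], its
   shape does not depend on the actual degrees, so its entries are polynomial in the
   coefficients even where the degrees drop *)
Definition sylvester N n (p q : {poly R}) : 'M[R]_N :=
  \matrix_(i < N, j < N) if (i < n)%N then ('X^i * p)`_j else ('X^(i - n) * q)`_j.

Lemma sylvester_common_root N n (p q : {poly R}) z : (0 < N)%N ->
  (size p + n <= N.+1)%N -> (size q <= n.+1)%N ->
  root p z -> root q z -> \det (sylvester N n p q) = 0.
Proof.
move=> N0 hp hq /eqP rp /eqP rq.
have size_XnM i (r : {poly R}) : (size ('X^i * r)%R <= i + size r)%N.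
  by apply: leq_trans (size_polyMleq _ _) _; rewrite size_polyXn addSn.
pose x : 'cV[R]_N := \col_(j < N) z ^+ j.
have hx : sylvester N n p q *m x = 0.
  apply/colP => i; rewrite !mxE.
  have [hi|hi] := boolP (i < n)%N.
    under eq_bigr do rewrite !mxE hi.
    rewrite -horner_coef_wide ?hornerM ?rp ?mulr0 //.
    apply: leq_trans (size_XnM _ _) _; rewrite addnC -ltnS.
    by apply: leq_trans hp; rewrite ltn_add2l.
  under eq_bigr do rewrite !mxE (negPf hi).
  rewrite -horner_coef_wide ?hornerM ?rq ?mulr0 //.
  apply: leq_trans (size_XnM _ _) _.
  have := ltn_ord i; move: hi; rewrite -leqNgt => hi hiN.
  by apply: leq_trans (leq_add (leqnn _) hq) _; rewrite addnS subnK.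
apply/eqP; apply: contraT => hd.
have hu : sylvester N n p q \in unitmx by rewrite unitmxE unitfE.
have : x = 0 by rewrite -(mulKmx hu x) hx mulmx0.
by move/matrixP => /(_ (Ordinal N0) 0); rewrite !mxE expr0 => /eqP; rewrite oner_eq0.
Qed.

Lemma resultant_sylvester (p q : {poly R}) m n : size p = m.+1 -> size q = n.+1 ->
  resultant p q = \det (sylvester (n + m) n p q).
Proof.
move=> hp hq; rewrite /resultant.
have -> : Sylvester_mx p q = sylvester ((size q).-1 + (size p).-1) (size q).-1 p q.
  apply/matrixP => i j; rewrite Sylvester_mxE mxE; case: splitP => k hk.
    by rewrite hk coefXnM; case: ltnP => h; rewrite ?mulr0n ?mulr1n.
  by rewrite hk addKn coefXnM; case: ltnP => h; rewrite ?mulr0n ?mulr1n.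
by rewrite hp hq.
Qed.

Lemma polyfun_det_sylvester N n (P Q : qvf R -> {poly R}) : polycoefs P -> polycoefs Q ->
  polyfun (fun v => \det (sylvester N n (P v) (Q v))).
Proof.
move=> hP hQ; apply: polyfun_det => i j; have [hi|hi] := boolP (i < n)%N.
  by apply: (polyfun_ext _ (polycoefs_XnM i hP j)) => v; rewrite mxE hi.
by apply: (polyfun_ext _ (polycoefs_XnM (i - n) hQ j)) => v; rewrite mxE (negPf hi).
Qed.

End Sylvester.

Section Elimination.
Variable R : closedFieldType.
Implicit Types v : qvf R.

(* Write P = P0(x) + P1(x) y + c5 y^2 and Q = Q0(x) + Q1(x) y + c11 y^2. Then
   c11 P - c5 Q = - (lam(x) y + mu(x)), so the abscissae of the singular points are
   roots of res = mu^2 - lam nu; where lam(x) != 0 the ordinate is - mu(x) / lam(x),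
   and jac(x) = lam(x)^2 det Dv(x, - mu(x) / lam(x)). *)
Definition polyP0 v : {poly R} := (coef v 0)%:P + (coef v 1)%:P * 'X + (coef v 3)%:P * 'X^2.
Definition polyP1 v : {poly R} := (coef v 2)%:P + (coef v 4)%:P * 'X.
Definition polyQ0 v : {poly R} := (coef v 6)%:P + (coef v 7)%:P * 'X + (coef v 9)%:P * 'X^2.
Definition polyQ1 v : {poly R} := (coef v 8)%:P + (coef v 10)%:P * 'X.
Definition elim_mu v := (coef v 5)%:P * polyQ0 v - (coef v 11)%:P * polyP0 v.
Definition elim_lam v := (coef v 5)%:P * polyQ1 v - (coef v 11)%:P * polyP1 v.
Definition elim_nu v := polyP1 v * polyQ0 v - polyQ1 v * polyP0 v.
Definition elim_res v := elim_mu v * elim_mu v - elim_lam v * elim_nu v.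
Definition elim_jac v :=
  (elim_lam v * ((coef v 1)%:P + (2%:R * coef v 3)%:P * 'X) - (coef v 4)%:P * elim_mu v) *
  (elim_lam v * ((coef v 8)%:P + (coef v 10)%:P * 'X) - (2%:R * coef v 11)%:P * elim_mu v) -
  (elim_lam v * ((coef v 2)%:P + (coef v 4)%:P * 'X) - (2%:R * coef v 5)%:P * elim_mu v) *
  (elim_lam v * ((coef v 7)%:P + (2%:R * coef v 9)%:P * 'X) - (coef v 10)%:P * elim_mu v).

Definition elim_point v (x : R) : R * R := (x, - (elim_mu v).[x] / (elim_lam v).[x]).

Lemma horner_elim_lam v x :
  (elim_lam v).[x] = coef v 5 * (coef v 8 + coef v 10 * x) - coef v 11 * (coef v 2 + coef v 4 * x).
Proof. by rewrite /elim_lam /polyQ1 /polyP1 !hornerE. Qed.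

Lemma horner_elim_mu v x : (elim_mu v).[x] =
  coef v 5 * (coef v 6 + coef v 7 * x + coef v 9 * x ^+ 2)
  - coef v 11 * (coef v 0 + coef v 1 * x + coef v 3 * x ^+ 2).
Proof. by rewrite /elim_mu /polyQ0 /polyP0 !hornerE. Qed.

Lemma horner_elim_nu v x : (elim_nu v).[x] =
  (coef v 2 + coef v 4 * x) * (coef v 6 + coef v 7 * x + coef v 9 * x ^+ 2)
  - (coef v 8 + coef v 10 * x) * (coef v 0 + coef v 1 * x + coef v 3 * x ^+ 2).
Proof. by rewrite /elim_nu /polyQ0 /polyP0 /polyQ1 /polyP1 !hornerE. Qed.

Lemma horner_elim_res v x :
  (elim_res v).[x] = (elim_mu v).[x] * (elim_mu v).[x] - (elim_lam v).[x] * (elim_nu v).[x].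
Proof. by rewrite /elim_res !hornerE. Qed.

Lemma horner_elim_jac v x : (elim_jac v).[x] =
  ((elim_lam v).[x] * (coef v 1 + 2%:R * coef v 3 * x) - coef v 4 * (elim_mu v).[x]) *
  ((elim_lam v).[x] * (coef v 8 + coef v 10 * x) - 2%:R * coef v 11 * (elim_mu v).[x]) -
  ((elim_lam v).[x] * (coef v 2 + coef v 4 * x) - 2%:R * coef v 5 * (elim_mu v).[x]) *
  ((elim_lam v).[x] * (coef v 7 + 2%:R * coef v 9 * x) - coef v 10 * (elim_mu v).[x]).
Proof. by rewrite /elim_jac !hornerE. Qed.

Lemma elim_y2 v x y :
  coef v 11 * vP v (x, y) - coef v 5 * vQ v (x, y) = - ((elim_lam v).[x] * y + (elim_mu v).[x]).
Proof. by rewrite horner_elim_lam horner_elim_mu /vP /vQ; ring. Qed.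

Lemma horner_elim_res_ideal v x y : (elim_res v).[x] =
  (coef v 11 * vP v (x, y) - coef v 5 * vQ v (x, y)) * ((elim_lam v).[x] * y - (elim_mu v).[x])
  + (elim_lam v).[x] * ((coef v 8 + coef v 10 * x) * vP v (x, y)
                        - (coef v 2 + coef v 4 * x) * vQ v (x, y)).
Proof. by rewrite horner_elim_res horner_elim_lam horner_elim_mu horner_elim_nu /vP /vQ; ring. Qed.

Lemma eval_elim_point v x : (elim_lam v).[x] != 0 ->
  vP v (elim_point v x) * (elim_lam v).[x] ^+ 2 = coef v 5 * (elim_res v).[x] /\
  vQ v (elim_point v x) * (elim_lam v).[x] ^+ 2 = coef v 11 * (elim_res v).[x].
Proof.
rewrite horner_elim_res /elim_point /vP /vQ horner_elim_lam horner_elim_mu horner_elim_nu => hl.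
by split; field.
Qed.

Lemma detD_elim_point v x : (elim_lam v).[x] != 0 ->
  detD v (elim_point v x) * (elim_lam v).[x] ^+ 2 = (elim_jac v).[x].
Proof.
rewrite horner_elim_jac /elim_point /detD /vPx /vPy /vQx /vQy /=.
rewrite horner_elim_lam horner_elim_mu => hl.
by field.
Qed.

Lemma size_poly_coef_neq0 (p : {poly R}) n :
  (size p <= n.+1)%N -> p`_n != 0 -> size p = n.+1.
Proof.
move=> h1 h2; apply/eqP; rewrite eqn_leq h1 /=; apply: contraT; rewrite -ltnNge ltnS => h.
by move: h2; rewrite nth_default // eqxx.
Qed.

Lemma size_polyC_leq (c : R) n : (0 < n)%N -> (size c%:P <= n)%N.
Proof. by move=> h; apply: leq_trans (size_polyC_leq1 c) h. Qed.

Lemma size_polyD_leq (p q : {poly R}) n :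
  (size p <= n)%N -> (size q <= n)%N -> (size (p + q)%R <= n)%N.
Proof. by move=> h1 h2; apply: leq_trans (size_polyD _ _) _; rewrite geq_max h1 h2. Qed.

Lemma size_polyB_leq (p q : {poly R}) n :
  (size p <= n)%N -> (size q <= n)%N -> (size (p - q)%R <= n)%N.
Proof. by move=> h1 h2; apply: size_polyD_leq => //; rewrite size_polyN. Qed.

Lemma size_polyM_leq (p q : {poly R}) m n k :
  (size p <= m.+1)%N -> (size q <= n.+1)%N -> (m + n < k)%N -> (size (p * q)%R <= k)%N.
Proof. by move=> h1 h2 h3; apply: leq_trans (size_polyMleq _ _) _; lia. Qed.

Lemma size_lin_leq (a b : R) n : (1 < n)%N -> (size (a%:P + b%:P * 'X)%R <= n)%N.
Proof.
move=> h; apply: size_polyD_leq; first by apply: size_polyC_leq; lia.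
by apply: (size_polyM_leq (m := 0) (n := 1)); [exact: size_polyC_leq | rewrite size_polyX | lia].
Qed.

Lemma size_quad_leq (a b c : R) n : (2 < n)%N -> (size (a%:P + b%:P * 'X + c%:P * 'X^2)%R <= n)%N.
Proof.
move=> h; apply: size_polyD_leq; first by apply: size_lin_leq; lia.
by apply: (size_polyM_leq (m := 0) (n := 2)); [exact: size_polyC_leq | rewrite size_polyXn | lia].
Qed.

Lemma size_elim_mu v : (size (elim_mu v) <= 3)%N.
Proof.
by apply: size_polyB_leq; apply: (size_polyM_leq (m := 0) (n := 2));
  first [exact: size_polyC_leq | exact: size_quad_leq | done].
Qed.

Lemma size_elim_lam v : (size (elim_lam v) <= 2)%N.
Proof.
by apply: size_polyB_leq; apply: (size_polyM_leq (m := 0) (n := 1));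
  first [exact: size_polyC_leq | exact: size_lin_leq | done].
Qed.

Lemma size_elim_nu v : (size (elim_nu v) <= 4)%N.
Proof.
by apply: size_polyB_leq; apply: (size_polyM_leq (m := 1) (n := 2));
  first [exact: size_lin_leq | exact: size_quad_leq | done].
Qed.

Lemma size_elim_res v : (size (elim_res v) <= 5)%N.
Proof.
apply: size_polyB_leq; first exact: (size_polyM_leq (size_elim_mu v) (size_elim_mu v)).
exact: (size_polyM_leq (size_elim_lam v) (size_elim_nu v)).
Qed.

Lemma size_elim_res_deriv v : (size (elim_res v)^`() <= 4)%N.
Proof.
have [->|h] := eqVneq (elim_res v) 0; first by rewrite deriv0 size_poly0.
by have := lt_size_deriv h; have := size_elim_res v; lia.
Qed.

Lemma size_elim_jac v : (size (elim_jac v) <= 5)%N.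
Proof.
have factor (a b c : R) :
    (size (elim_lam v * (a%:P + b%:P * 'X) - c%:P * elim_mu v)%R <= 3)%N.
  apply: size_polyB_leq.
    apply: (size_polyM_leq (m := 1) (n := 1)) => //; first exact: size_elim_lam.
    exact: size_lin_leq.
  by apply: (size_polyM_leq (m := 0) (n := 2)) => //; [exact: size_polyC_leq | exact: size_elim_mu].
by apply: size_polyB_leq; apply: (size_polyM_leq (factor _ _ _) (factor _ _ _)).
Qed.

Ltac polycoefs_tac :=
  unfold elim_jac, elim_res, elim_mu, elim_lam, elim_nu, polyP0, polyP1, polyQ0, polyQ1;
  repeat first [ apply: polycoefs_add | apply: polycoefs_opp | apply: polycoefs_mul
               | apply: polycoefs_deriv | apply: polycoefs_const | apply: polycoefs_C
               | (apply: polyfun_coef; done) | apply: polyfun_mul | apply: polyfun_const ].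

Lemma polycoefs_elim_res : polycoefs elim_res.
Proof. by polycoefs_tac. Qed.

Lemma polycoefs_elim_res_deriv : polycoefs (fun v => (elim_res v)^`()).
Proof. by polycoefs_tac. Qed.

Lemma polycoefs_elim_lam : polycoefs elim_lam.
Proof. by polycoefs_tac. Qed.

Lemma polycoefs_elim_jac : polycoefs elim_jac.
Proof. by polycoefs_tac. Qed.

End Elimination.

Section TraceKernel.
Variable R : closedFieldType.
Implicit Types v : qvf R.

Definition det3 (a b c d e f g h i : R) :=
  a * (e * i - f * h) - b * (d * i - f * g) + c * (d * h - e * g).

Lemma det3_kernel (a11 a12 a13 a21 a22 a23 a31 a32 a33 y1 y2 y3 : R) :
  det3 a11 a12 a13 a21 a22 a23 a31 a32 a33 != 0 ->
  a11 * y1 + a12 * y2 + a13 * y3 = 0 -> a21 * y1 + a22 * y2 + a23 * y3 = 0 ->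
  a31 * y1 + a32 * y2 + a33 * y3 = 0 -> [/\ y1 = 0, y2 = 0 & y3 = 0].
Proof.
move=> hd h1 h2 h3; set D := det3 _ _ _ _ _ _ _ _ _ in hd.
have cancel y : D * y = 0 -> y = 0 by move/eqP; rewrite mulf_eq0 (negPf hd) => /eqP.
split; apply: cancel.
- transitivity ((a22 * a33 - a23 * a32) * (a11 * y1 + a12 * y2 + a13 * y3)
    - (a12 * a33 - a13 * a32) * (a21 * y1 + a22 * y2 + a23 * y3)
    + (a12 * a23 - a13 * a22) * (a31 * y1 + a32 * y2 + a33 * y3)); first by rewrite /D /det3; ring.
  by rewrite h1 h2 h3; ring.
- transitivity (- (a21 * a33 - a23 * a31) * (a11 * y1 + a12 * y2 + a13 * y3)
    + (a11 * a33 - a13 * a31) * (a21 * y1 + a22 * y2 + a23 * y3)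
    - (a11 * a23 - a13 * a21) * (a31 * y1 + a32 * y2 + a33 * y3)); first by rewrite /D /det3; ring.
  by rewrite h1 h2 h3; ring.
- transitivity ((a21 * a32 - a22 * a31) * (a11 * y1 + a12 * y2 + a13 * y3)
    - (a11 * a32 - a12 * a31) * (a21 * y1 + a22 * y2 + a23 * y3)
    + (a11 * a22 - a12 * a21) * (a31 * y1 + a32 * y2 + a33 * y3)); first by rewrite /D /det3; ring.
  by rewrite h1 h2 h3; ring.
Qed.

Lemma affine_form_eq0 (e0 e1 e2 : R) (p1 p2 p3 : R * R) : cross p1 p2 p3 != 0 ->
  e0 + e1 * p1.1 + e2 * p1.2 = 0 -> e0 + e1 * p2.1 + e2 * p2.2 = 0 ->
  e0 + e1 * p3.1 + e2 * p3.2 = 0 -> [/\ e0 = 0, e1 = 0 & e2 = 0].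
Proof.
move=> hc h1 h2 h3.
have cancel y : y * cross p1 p2 p3 = 0 -> y = 0.
  by move/eqP; rewrite mulf_eq0 (negPf hc) orbF => /eqP.
have z1 : e1 = 0.
  apply: cancel.
  transitivity ((p3.2 - p1.2) * ((e0 + e1 * p2.1 + e2 * p2.2) - (e0 + e1 * p1.1 + e2 * p1.2))
     - (p2.2 - p1.2) * ((e0 + e1 * p3.1 + e2 * p3.2) - (e0 + e1 * p1.1 + e2 * p1.2))).
    by rewrite /cross; ring.
  by rewrite h1 h2 h3; ring.
have z2 : e2 = 0.
  apply: cancel.
  transitivity ((p2.1 - p1.1) * ((e0 + e1 * p3.1 + e2 * p3.2) - (e0 + e1 * p1.1 + e2 * p1.2))
     - (p3.1 - p1.1) * ((e0 + e1 * p2.1 + e2 * p2.2) - (e0 + e1 * p1.1 + e2 * p1.2))).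
    by rewrite /cross; ring.
  by rewrite h1 h2 h3; ring.
by split => //; rewrite -h1 z1 z2; ring.
Qed.

Definition trform0 v (X1 X2 X3 X4 : R) :=
  coef v 1 * X1 + coef v 7 * X2 + coef v 2 * X3 + coef v 8 * X4.
Definition trform1 v (X1 X2 X3 X4 : R) :=
  2%:R * coef v 3 * X1 + 2%:R * coef v 9 * X2 + coef v 4 * X3 + coef v 10 * X4.
Definition trform2 v (X1 X2 X3 X4 : R) :=
  coef v 4 * X1 + coef v 10 * X2 + 2%:R * coef v 5 * X3 + 2%:R * coef v 11 * X4.

Lemma tr_mul_Dv v X1 X2 X3 X4 p :
  X1 * vPx v p + X2 * vQx v p + X3 * vPy v p + X4 * vQy v p =
  trform0 v X1 X2 X3 X4 + trform1 v X1 X2 X3 X4 * p.1 + trform2 v X1 X2 X3 X4 * p.2.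
Proof. by rewrite /trform0 /trform1 /trform2 /vPx /vQx /vPy /vQy; ring. Qed.

(* the signed 3x3 minors of the matrix of (trform0, trform1, trform2): a kernel vector *)
Definition kerv1 v := det3 (coef v 7) (coef v 2) (coef v 8) (2%:R * coef v 9) (coef v 4)
  (coef v 10) (coef v 10) (2%:R * coef v 5) (2%:R * coef v 11).
Definition kerv2 v := - det3 (coef v 1) (coef v 2) (coef v 8) (2%:R * coef v 3) (coef v 4)
  (coef v 10) (coef v 4) (2%:R * coef v 5) (2%:R * coef v 11).
Definition kerv3 v := det3 (coef v 1) (coef v 7) (coef v 8) (2%:R * coef v 3) (2%:R * coef v 9)
  (coef v 10) (coef v 4) (coef v 10) (2%:R * coef v 11).
Definition kerv4 v := - det3 (coef v 1) (coef v 7) (coef v 2) (2%:R * coef v 3) (2%:R * coef v 9)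
  (coef v 4) (coef v 4) (coef v 10) (2%:R * coef v 5).

Lemma trform_kerv v :
  [/\ trform0 v (kerv1 v) (kerv2 v) (kerv3 v) (kerv4 v) = 0,
      trform1 v (kerv1 v) (kerv2 v) (kerv3 v) (kerv4 v) = 0 &
      trform2 v (kerv1 v) (kerv2 v) (kerv3 v) (kerv4 v) = 0].
Proof. by rewrite /trform0 /trform1 /trform2 /kerv1 /kerv2 /kerv3 /kerv4 /det3; split; ring. Qed.

Lemma trform_kernel v X1 X2 X3 X4 : kerv4 v != 0 ->
  trform0 v X1 X2 X3 X4 = 0 -> trform1 v X1 X2 X3 X4 = 0 -> trform2 v X1 X2 X3 X4 = 0 ->
  let s := X4 / kerv4 v in [/\ X1 = s * kerv1 v, X2 = s * kerv2 v & X3 = s * kerv3 v].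
Proof.
move=> hn h0 h1 h2 s; have hs : X4 = s * kerv4 v by rewrite /s divfK.
have [d0 d1 d2] := trform_kerv v.
have hd : det3 (coef v 1) (coef v 7) (coef v 2) (2%:R * coef v 3) (2%:R * coef v 9) (coef v 4)
   (coef v 4) (coef v 10) (2%:R * coef v 5) != 0 by rewrite -oppr_eq0.
have e0 : coef v 1 * (X1 - s * kerv1 v) + coef v 7 * (X2 - s * kerv2 v)
          + coef v 2 * (X3 - s * kerv3 v) = 0.
  transitivity (trform0 v X1 X2 X3 X4 - s * trform0 v (kerv1 v) (kerv2 v) (kerv3 v) (kerv4 v)).
    by rewrite /trform0 hs; ring.
  by rewrite h0 d0; ring.
have e1 : 2%:R * coef v 3 * (X1 - s * kerv1 v) + 2%:R * coef v 9 * (X2 - s * kerv2 v)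
          + coef v 4 * (X3 - s * kerv3 v) = 0.
  transitivity (trform1 v X1 X2 X3 X4 - s * trform1 v (kerv1 v) (kerv2 v) (kerv3 v) (kerv4 v)).
    by rewrite /trform1 hs; ring.
  by rewrite h1 d1; ring.
have e2 : coef v 4 * (X1 - s * kerv1 v) + coef v 10 * (X2 - s * kerv2 v)
          + 2%:R * coef v 5 * (X3 - s * kerv3 v) = 0.
  transitivity (trform2 v X1 X2 X3 X4 - s * trform2 v (kerv1 v) (kerv2 v) (kerv3 v) (kerv4 v)).
    by rewrite /trform2 hs; ring.
  by rewrite h2 d2; ring.
have [y1 y2 y3] := det3_kernel hd e0 e1 e2.
by split; apply/eqP; rewrite -subr_eq0; apply/eqP.
Qed.

End TraceKernel.

Section GenericLocus.
Variable R : closedFieldType.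
Implicit Types v : qvf R.

Lemma sing_list_elim v rs : uniq rs -> (forall z, root (elim_res v) z = (z \in rs)) ->
  (forall z, z \in rs -> (elim_lam v).[z] != 0) -> sing_list v (map (elim_point v) rs).
Proof.
move=> urs hroot hlam; split; first by rewrite map_inj_uniq // => z1 z2 [].
case=> x y; split.
  case=> hP hQ; have hx : x \in rs.
    by rewrite -hroot; apply/eqP; rewrite (horner_elim_res_ideal v x y) hP hQ; ring.
  suff -> : y = - (elim_mu v).[x] / (elim_lam v).[x] by apply: map_f.
  have := elim_y2 v x y; rewrite hP hQ !mulr0 subrr => /esym/eqP; rewrite oppr_eq0.
  rewrite addr_eq0 => /eqP hy; apply: (mulIf (hlam _ hx)).
  by rewrite divfK ?hlam // mulrC hy.
case/mapP => z hz [-> ->].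
have [e1 e2] := eval_elim_point (hlam _ hz).
have hr : (elim_res v).[z] = 0 by apply/eqP; rewrite -/(root _ _) hroot.
have l2 : (elim_lam v).[z] ^+ 2 != 0 by rewrite expf_neq0 // hlam.
rewrite hr !mulr0 in e1 e2.
by split; [move/eqP: e1 | move/eqP: e2]; rewrite mulf_eq0 (negPf l2) orbF => /eqP.
Qed.

(* twin_discr v != 0 says: res has degree 4 and simple roots, lam and jac do not vanish
   at them, and the kernel matrix [[kerv1, kerv2], [kerv3, kerv4]] has kerv4 != 0 and
   nonzero trace and determinant *)
Definition twin_discr v :=
  (elim_res v)`_4 * \det (sylvester 7 3 (elim_res v) (elim_res v)^`())
  * \det (sylvester 5 1 (elim_res v) (elim_lam v))
  * \det (sylvester 8 4 (elim_res v) (elim_jac v))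
  * kerv4 v * (kerv1 v + kerv4 v) * (kerv1 v * kerv4 v - kerv2 v * kerv3 v).

Lemma polyfun_twin_discr : polyfun twin_discr.
Proof.
rewrite /twin_discr; repeat apply: polyfun_mul.
- exact: polycoefs_elim_res.
- by apply: polyfun_det_sylvester; [exact: polycoefs_elim_res | exact: polycoefs_elim_res_deriv].
- by apply: polyfun_det_sylvester; [exact: polycoefs_elim_res | exact: polycoefs_elim_lam].
- by apply: polyfun_det_sylvester; [exact: polycoefs_elim_res | exact: polycoefs_elim_jac].
all: rewrite /kerv1 /kerv2 /kerv3 /kerv4 /det3.
all: repeat first [ apply: polyfun_add | apply: polyfun_opp | apply: polyfun_mul
                  | (apply: polyfun_coef; done) | apply: polyfun_const ].
Qed.

Lemma twin_discr_neq0 v : twin_discr v != 0 ->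
  [/\ (elim_res v)`_4 != 0, \det (sylvester 7 3 (elim_res v) (elim_res v)^`()) != 0,
      \det (sylvester 5 1 (elim_res v) (elim_lam v)) != 0,
      \det (sylvester 8 4 (elim_res v) (elim_jac v)) != 0 &
      [/\ kerv4 v != 0, kerv1 v + kerv4 v != 0 & kerv1 v * kerv4 v - kerv2 v * kerv3 v != 0]].
Proof.
rewrite /twin_discr !mulf_eq0 !negb_or -!andbA.
by case/and5P => h1 h2 h3 h4 /and3P [h5 h6 h7].
Qed.

Lemma twin_discr_four_nondeg v : twin_discr v != 0 -> four_nondeg_sing v.
Proof.
case/twin_discr_neq0 => r4 dsc dlam djac _.
have szr : size (elim_res v) = 5%N by apply: size_poly_coef_neq0; rewrite ?size_elim_res.
have [rs hrs] := closed_field_poly_normal (elim_res v).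
have lc0 : lead_coef (elim_res v) != 0 by rewrite lead_coef_eq0 -size_poly_eq0 szr.
have szrs : size rs = 4%N by move: szr; rewrite hrs size_scale // size_prod_XsubC => -[].
have hroot z : root (elim_res v) z = (z \in rs) by rewrite hrs rootZ // root_prod_XsubC.
have no_common_root (q : {poly R}) N n z : \det (sylvester N n (elim_res v) q) != 0 ->
    (size (elim_res v) + n <= N.+1)%N -> (size q <= n.+1)%N -> (0 < N)%N ->
    z \in rs -> q.[z] != 0.
  move=> hdet hp hq N0 hz; apply: contra hdet => /eqP qz; apply/eqP.
  by apply: (sylvester_common_root (z := z) N0 hp hq); [rewrite hroot | apply/eqP].
have hlam z : z \in rs -> (elim_lam v).[z] != 0.
  by apply: (no_common_root _ _ _ _ dlam); rewrite ?szr ?size_elim_lam.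
have hjac z : z \in rs -> (elim_jac v).[z] != 0.
  by apply: (no_common_root _ _ _ _ djac); rewrite ?szr ?size_elim_jac.
have urs : uniq rs.
  rewrite -separable_prod_XsubC unlock; apply/Pdiv.ClosedField.root_coprimep => z.
  rewrite root_prod_XsubC => hz.
  have := no_common_root _ _ _ z dsc; rewrite szr size_elim_res_deriv => /(_ isT isT isT hz).
  by rewrite {1}hrs derivZ hornerZ mulf_eq0 negb_or => /andP [].
exists (map (elim_point v) rs); split; first exact: sing_list_elim.
rewrite size_map szrs; split=> // p /mapP [z hz ->].
have E := detD_elim_point (hlam _ hz).
by apply: contra_neq (hjac _ hz) => D0; rewrite -E D0 mul0r.
Qed.

End GenericLocus.

Section Twins.
Variable R : closedFieldType.
Hypothesis charR0 : [pchar R] =i pred0.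
Implicit Types v w : qvf R.

Lemma same_sing_lmul v w p1 p2 p3 p4 : sing_list v [:: p1; p2; p3; p4] ->
  detD v p1 != 0 -> (forall p, singular v p <-> singular w p) ->
  exists m11 m12 m21 m22, w = lmul m11 m12 m21 m22 v.
Proof.
move=> sl nd hsing.
have [a [b [c [d [e [f [al [be [hd h1 h2 h3 [h4 ha hb _]]]]]]]]]] := normalize_sing4 charR0 sl.
have hv := pushforwardP e f hd v; have hw := pushforwardP e f hd w.
have sv q r : q \in [:: p1; p2; p3; p4] -> affT a b c d e f q = r ->
    singular (pushforward a b c d e f v) r.
  by move=> /sl.2 + <-; rewrite (singular_pushforward _ _ hv).
have sw q r : q \in [:: p1; p2; p3; p4] -> affT a b c d e f q = r ->
    singular (pushforward a b c d e f w) r.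
  by move=> /sl.2/hsing + <-; rewrite (singular_pushforward _ _ hw).
have [i1 i2 i3 i4] : [/\ p1 \in [:: p1; p2; p3; p4], p2 \in [:: p1; p2; p3; p4],
                        p3 \in [:: p1; p2; p3; p4] & p4 \in [:: p1; p2; p3; p4]].
  by rewrite !inE !eqxx !orbT.
have hD : detD (pushforward a b c d e f v) (0, 0) != 0.
  by rewrite -h1 (spectrum_pushforward charR0 hd p1 hv).2.
have [k11 [k12 [k21 [k22 Ek]]]] := normal_sing4_lmul charR0 ha hb
  (sv _ _ i1 h1) (sv _ _ i2 h2) (sv _ _ i3 h3) (sv _ _ i4 h4)
  (sw _ _ i1 h1) (sw _ _ i2 h2) (sw _ _ i3 h3) (sw _ _ i4 h4) hD.
exact: (lmul_pushforward charR0 hd Ek).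
Qed.

Definition kerv_lmul (c : R) v :=
  lmul (1 + c * kerv1 v) (c * kerv2 v) (c * kerv3 v) (1 + c * kerv4 v) v.

Lemma trD_kerv_lmul c v p : trD (kerv_lmul c v) p = trD v p.
Proof.
have [d0 d1 d2] := trform_kerv v.
transitivity (trD v p + c * (kerv1 v * vPx v p + kerv2 v * vQx v p + kerv3 v * vPy v p
                             + kerv4 v * vQy v p)); first by rewrite trD_lmul /trD; ring.
by rewrite tr_mul_Dv d0 d1 d2; ring.
Qed.

Lemma detD_kerv_lmul c v p : detD (kerv_lmul c v) p =
  (1 + c * (kerv1 v + kerv4 v) + c ^+ 2 * (kerv1 v * kerv4 v - kerv2 v * kerv3 v)) * detD v p.
Proof. by rewrite detD_lmul; congr (_ * _); ring. Qed.

Lemma kerv_lmul0 v : kerv_lmul 0 v = v.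
Proof. by rewrite /kerv_lmul !mul0r addr0 lmul1. Qed.

Lemma lmul_trD_eq v m11 m12 m21 m22 p1 p2 p3 : kerv4 v != 0 -> cross p1 p2 p3 != 0 ->
  (forall p, p \in [:: p1; p2; p3] -> trD (lmul m11 m12 m21 m22 v) p = trD v p) ->
  lmul m11 m12 m21 m22 v = kerv_lmul ((m22 - 1) / kerv4 v) v.
Proof.
move=> hn hc htr.
have trz p : p \in [:: p1; p2; p3] -> trform0 v (m11 - 1) m12 m21 (m22 - 1)
    + trform1 v (m11 - 1) m12 m21 (m22 - 1) * p.1
    + trform2 v (m11 - 1) m12 m21 (m22 - 1) * p.2 = 0.
  move=> hp; rewrite -tr_mul_Dv -(subrr (trD v p)) -{1}(htr p hp) trD_lmul /trD; ring.
have [z0 z1 z2] := affine_form_eq0 hc (trz p1 (mem_head _ _))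
  (trz p2 ltac:(by rewrite !inE eqxx orbT)) (trz p3 ltac:(by rewrite !inE eqxx !orbT)).
have [k1 k2 k3] := trform_kernel hn z0 z1 z2.
rewrite /kerv_lmul -k2 -k3 -k1 divfK //; congr lmul; ring.
Qed.

Definition twin_scale v := - (kerv1 v + kerv4 v) / (kerv1 v * kerv4 v - kerv2 v * kerv3 v).

Definition twin_of v := kerv_lmul (twin_scale v) v.

Lemma det_twin_scale v : kerv1 v * kerv4 v - kerv2 v * kerv3 v != 0 ->
  1 + twin_scale v * (kerv1 v + kerv4 v)
    + twin_scale v ^+ 2 * (kerv1 v * kerv4 v - kerv2 v * kerv3 v) = 1.
Proof. by move=> hN; rewrite /twin_scale; field. Qed.

Lemma twin_discr_twin_of v : twin_discr v != 0 -> twin v (twin_of v).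
Proof.
move=> hv; have [_ _ _ _ [_ htr hN]] := twin_discr_neq0 hv.
have [s [sl _]] := twin_discr_four_nondeg hv.
have hdet p : detD (twin_of v) p = detD v p by rewrite detD_kerv_lmul det_twin_scale ?mul1r.
have hdetM : (1 + twin_scale v * kerv1 v) * (1 + twin_scale v * kerv4 v)
             - twin_scale v * kerv2 v * (twin_scale v * kerv3 v) = 1.
  by rewrite -[RHS](det_twin_scale hN); ring.
have hsing p : singular v p <-> singular (twin_of v) p by rewrite singular_lmul ?hdetM ?oner_eq0.
have slw : sing_list (twin_of v) s by case: sl => us hs; split=> // p; rewrite -hsing.
split; last first.
  split; first by exists s.
  split; first by exists s.
  by split=> p; [exact: hsing | rewrite trD_kerv_lmul hdet].
move=> E; apply: (sing_list_not_all_injective charR0 sl (g := fun x => (x, 0))).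
  by move=> x y [].
have ht : twin_scale v != 0 by rewrite /twin_scale mulf_neq0 ?oppr_eq0 ?invr_eq0.
move=> x; apply: (lin2_eq0 hN); apply: (mulfI ht); rewrite mulr0.
  transitivity (vP (twin_of v) (x, 0) - vP v (x, 0)); first by rewrite vP_lmul; ring.
  by rewrite -E subrr.
transitivity (vQ (twin_of v) (x, 0) - vQ v (x, 0)); first by rewrite vQ_lmul; ring.
by rewrite -E subrr.
Qed.

Lemma twin_discr_twin_uniq v w : twin_discr v != 0 -> twin v w -> w = twin_of v.
Proof.
move=> hv [hne [_ [_ [hsing hspec]]]].
have [_ _ _ _ [hn _ hN]] := twin_discr_neq0 hv.
have [s [sl [sz nd]]] := twin_discr_four_nondeg hv.
case: s sl sz nd => [|p1 [|p2 [|p3 [|p4 [|]]]]] // sl _ nd.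
have [i1 i2 i3] : [/\ p1 \in [:: p1; p2; p3; p4], p2 \in [:: p1; p2; p3; p4]
                    & p3 \in [:: p1; p2; p3; p4]] by rewrite !inE !eqxx !orbT.
have hc : cross p1 p2 p3 != 0.
  move: (sl.1); rewrite /= !inE !negb_or -!andbA => /and5P[n12 n13 _ n23 _].
  by apply: (sing_list_not_collinear charR0 sl i1 i2 i3); rewrite // eq_sym.
have [m11 [m12 [m21 [m22 Ew]]]] := same_sing_lmul sl (nd _ i1) hsing; subst w.
have sp q : q \in [:: p1; p2; p3] -> q \in [:: p1; p2; p3; p4].
  by rewrite !inE => /or3P [] ->; rewrite ?orbT.
have := lmul_trD_eq hn hc (fun q hq => esym (hspec q ((sl.2 q).2 (sp q hq))).1).
set t := _ / _ => Et; rewrite Et in hne hspec *.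
have t0 : t != 0 by apply: contra_not_neq hne => ->; rewrite kerv_lmul0.
suff -> : t = twin_scale v by [].
have := (hspec p1 ((sl.2 p1).2 i1)).2; rewrite detD_kerv_lmul -{1}[detD v p1]mul1r.
move/(mulIf (nd _ i1)) => E1.
have : t * ((kerv1 v + kerv4 v) + t * (kerv1 v * kerv4 v - kerv2 v * kerv3 v)) = 0.
  by transitivity ((1 + t * (kerv1 v + kerv4 v)
    + t ^+ 2 * (kerv1 v * kerv4 v - kerv2 v * kerv3 v)) - 1); [ring | rewrite -E1 subrr].
move/eqP; rewrite mulf_eq0 (negPf t0) /= => /eqP h.
by apply: (mulIf hN); rewrite /twin_scale divfK //; apply/eqP; rewrite -addr_eq0 addrC h.
Qed.

End Twins.

Section Example.
Variable R : closedFieldType.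
Hypothesis charR0 : [pchar R] =i pred0.

Lemma resultant_neq0_bezout (p q u w : {poly R}) (g : R) :
  g != 0 -> u * p + w * q = g%:P -> resultant p q != 0.
Proof.
move=> g0 E; rewrite resultant_eq0 -leqNgt.
have : gcdp p q %| g%:P.
  by rewrite -E dvdp_add // dvdp_mull ?dvdp_gcdl ?dvdp_gcdr.
move/dvdp_leq => /(_ _) h; apply: leq_trans (h _) _; first by rewrite polyC_eq0.
by rewrite size_polyC g0.
Qed.

(* P = y + x^2 - x y, Q = - x - y^2 *)
Definition v0 : qvf R := qvf_of (fun k => nth 0 [:: 0; 0; 1; 1; -1; 0; 0; -1; 0; 0; 0; -1] k).

Lemma elim_res_v0 : elim_res v0 = 'X^4 + 'X^3 - 2%:R * 'X^2 + 'X.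
Proof.
rewrite /elim_res /elim_mu /elim_lam /elim_nu /polyP0 /polyP1 /polyQ0 /polyQ1.
by rewrite !coef_qvf_of //=; ring.
Qed.

Lemma elim_res_deriv_v0 : (elim_res v0)^`() = 1 - 4%:R * 'X + 3%:R * 'X^2 + 4%:R * 'X^3.
Proof. by rewrite elim_res_v0 !derivE /=; ring. Qed.

Lemma elim_lam_v0 : elim_lam v0 = 1 - 'X.
Proof. by rewrite /elim_lam /polyP1 /polyQ1 !coef_qvf_of //=; ring. Qed.

Lemma elim_jac_v0 : elim_jac v0 = 1 - 3%:R * 'X + 3%:R * 'X^2 + 3%:R * 'X^3 - 2%:R * 'X^4.
Proof.
by rewrite /elim_jac /elim_mu /elim_lam /polyP0 /polyP1 /polyQ0 /polyQ1 !coef_qvf_of //=; ring.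
Qed.

Lemma twin_discr_v0 : twin_discr v0 != 0.
Proof.
have n0 := natrS_neq0 charR0.
have c4 : (elim_res v0)`_4 = 1 by rewrite elim_res_v0 !coefE /=; ring.
have szr : size (elim_res v0) = 5%N.
  by apply: size_poly_coef_neq0; rewrite ?size_elim_res ?c4 ?oner_eq0.
have szdr : size (elim_res v0)^`() = 4%N.
  by apply: size_poly_coef_neq0; rewrite ?size_elim_res_deriv // coef_deriv c4.
have szl : size (elim_lam v0) = 2%N.
  apply: size_poly_coef_neq0; rewrite ?size_elim_lam // elim_lam_v0 !coefE /=.
  by rewrite sub0r oppr_eq0 oner_eq0.
have szj : size (elim_jac v0) = 5%N.
  apply: size_poly_coef_neq0; rewrite ?size_elim_jac // elim_jac_v0 !coefE /=.
  by rewrite (_ : _ + _ = - 2%:R); [rewrite oppr_eq0 | ring].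
have kerv_v0 : [/\ kerv1 v0 = - 2%:R, kerv2 v0 = - 4%:R, kerv3 v0 = - 4%:R & kerv4 v0 = 1].
  by rewrite /kerv1 /kerv2 /kerv3 /kerv4 /det3 !coef_qvf_of //=; split; ring.
rewrite /twin_discr c4; have [-> -> -> ->] := kerv_v0.
rewrite !mulf_neq0 ?oner_eq0 //.
- rewrite -(resultant_sylvester szr szdr).
  apply: (resultant_neq0_bezout (g := - 11191%:R) (u := -74005%:R%:P + 6498%:R%:P * 'X
    + 37544%:R%:P * 'X^2) (w := -11191%:R%:P + 29241%:R%:P * 'X - 3971%:R%:P * 'X^2
    - 9386%:R%:P * 'X^3)); first by rewrite oppr_eq0 n0.
  by rewrite elim_res_deriv_v0 elim_res_v0; ring.
- rewrite -(resultant_sylvester szr szl).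
  apply: (resultant_neq0_bezout (g := 1) (u := 1) (w := 1 + 2%:R * 'X^2 + 'X^3)).
    exact: oner_neq0.
  by rewrite elim_res_v0 elim_lam_v0; ring.
- rewrite -(resultant_sylvester szr szj).
  apply: (resultant_neq0_bezout (g := 558%:R) (u := 2340%:R%:P + 1944%:R%:P * 'X
    - 702%:R%:P * 'X^2 - 468%:R%:P * 'X^3) (w := 558%:R%:P - 666%:R%:P * 'X
    - 936%:R%:P * 'X^2 - 234%:R%:P * 'X^3)); first exact: n0.
  by rewrite elim_res_v0 elim_jac_v0; ring.
- by rewrite (_ : _ + _ = -1); [rewrite oppr_eq0 oner_eq0 | ring].
by rewrite (_ : _ - _ = - 18%:R); [rewrite oppr_eq0 | ring].
Qed.

End Example.

Theorem theorem1p3 (R : closedFieldType) (charR0 : [pchar R] =i pred0) :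
  (forall v vt : qvf R,
     four_nondeg_sing v -> four_nondeg_sing vt -> same_spectra v vt ->
     exists (a b c d e f : R) (w : qvf R),
       a * d - b * c != 0 /\ is_pushforward a b c d e f vt w /\
       (w = v \/ twin v w)) /\
  (exists U : qvf R -> Prop,
     zariski_open U /\ (exists v, U v) /\
     forall v, U v -> exists! w, twin v w).
Proof.
split; first exact: same_spectra_affine_twin.
exists (fun v => twin_discr v != 0); split; first exact/zariski_open_neq0/polyfun_twin_discr.
split; first by exists (v0 R); exact: twin_discr_v0.
move=> v hv; exists (twin_of v); split; first exact: twin_discr_twin_of.
by move=> w /(twin_discr_twin_uniq charR0 hv) ->.
Qed.
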